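(* Let $K$ be an algebraically closed field complete with respect to a non-archimedean absolute value $|\cdot|$, with valuation ring $\mathcal{O}$, maximal ideal $\mathfrak{m}$, residue field $k$, and let $\varphi\in K(z)$ have degree two with three distinct fixed points in $\mathbb{P}^1(K)$, with multipliers $\lambda_1,\lambda_2,\lambda_3$. Then the fixed points are not all repelling. Moreover: (A) if $\varphi$ has two repelling fixed points, the third is attracting; (B) if $\varphi$ has exactly one repelling fixed point, the other two are indifferent; (C) if $\varphi$ has no repelling fixed points, then either some pair $i\ne j$ satisfies $\tilde\lambda_i\tilde\lambda_j\ne\tilde1$, or $\tilde\lambda_1=\tilde\lambda_2=\tilde\lambda_3=\tilde1$.
   Context: A fixed point with multiplier $\lambda$ is attracting if $|\lambda|<1$, indifferent if $|\lambda|=1$, repelling if $|\lambda|>1$. For $x\in\mathcal{O}$, $\tilde x$ denotes its image in $k=\mathcal{O}/\mathfrak{m}$. *)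

From HB Require Import structures.
From mathcomp Require Import all_boot all_order all_algebra.
From mathcomp Require Import reals.
Set Implicit Arguments. Unset Strict Implicit. Unset Printing Implicit Defensive.
Import Order.TTheory GRing.Theory Num.Theory.
Local Open Scope ring_scope.

Section Defs.
Variables (R : realType) (K : fieldType).

Definition nonarch_abs (abs : K -> R) : Prop :=
  [/\ forall x, 0 <= abs x,
      forall x, (abs x == 0) = (x == 0),
      forall x y, abs (x * y) = abs x * abs y
    & forall x y, abs (x + y) <= Num.max (abs x) (abs y)].

Definition abs_complete (abs : K -> R) : Prop :=
  forall u : nat -> K,
    (forall e : R, 0 < e -> exists N, forall m n, (N <= m)%N -> (N <= n)%N ->
        abs (u m - u n) < e) ->
    exists l : K, forall e : R, 0 < e -> exists N, forall n, (N <= n)%N ->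
        abs (u n - l) < e.

(* phi = p / q, a rational map of degree two (p, q coprime, max degree 2). *)
Definition rat_degree2 (p q : {poly K}) : Prop :=
  coprimep p q /\ maxn (size p) (size q) = 3%N.

(* Points of P^1(K): Some a = a in K, None = infinity. *)
Definition is_fixed (p q : {poly K}) (x : option K) : Prop :=
  match x with
  | Some a => q.[a] != 0 /\ p.[a] = a * q.[a]
  | None => (size q < size p)%N   (* phi(oo) = oo iff deg p > deg q *)
  end.

Definition rat_deriv_at (p q : {poly K}) (a : K) : K :=
  (p^`().[a] * q.[a] - p.[a] * q^`().[a]) / (q.[a] ^+ 2).

(* w^2 p(1/w), for deg p <= 2 *)
Definition recip2 (p : {poly K}) : {poly K} := \poly_(i < 3) p`_(2 - i).

(* Multiplier of phi = p/q at a fixed point x; at infinity it is computed in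
   the chart w = 1/z, i.e. the derivative at 0 of 1/phi(1/w) = recip2 q / recip2 p. *)
Definition multiplier (p q : {poly K}) (x : option K) : K :=
  match x with
  | Some a => rat_deriv_at p q a
  | None => rat_deriv_at (recip2 q) (recip2 p) 0
  end.

Definition attracting (abs : K -> R) (l : K) : Prop := abs l < 1.
Definition indifferent (abs : K -> R) (l : K) : Prop := abs l = 1.
Definition repelling (abs : K -> R) (l : K) : Prop := 1 < abs l.

(* For x, y in O, reduction equality  x~ = y~  in k = O/m  means x - y in m. *)
Definition res_eq (abs : K -> R) (x y : K) : Prop := abs (x - y) < 1.

End Defs.

(* The multipliers of the three fixed points of a quadratic rational map satisfy
   l1 l2 l3 - (l1 + l2 + l3) + 2 = 0, which is the holomorphic fixed point formula
   sum_i 1 / (1 - l_i) = 1 with denominators cleared; it follows from Vieta's formulas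
   for the fixed point equation p(z) = z q(z).  Everything else is the ultrametric
   inequality applied to rearrangements of this identity, e.g.
   l3 (l1 l2 - 1) = l1 + l2 - 2: if |l1|, |l2| > 1 the left factor has absolute value
   |l1 l2| while the right-hand side is smaller, so |l3| < 1. *)
From HB Require Import structures.
From mathcomp Require Import all_boot all_order all_algebra.
From mathcomp Require Import reals ring lra.
Set Implicit Arguments. Unset Strict Implicit. Unset Printing Implicit Defensive.
Import Order.TTheory GRing.Theory Num.Theory.
Local Open Scope ring_scope.

Section MultiplierRelation.
Variable K : fieldType.

Definition multiplier_relation (x y z : K) := x * y * z - (x + y + z) + 2 = 0.

Lemma multiplier_relation_swap12 x y z :
  multiplier_relation x y z -> multiplier_relation y x z.
Proof. by rewrite /multiplier_relation => h; rewrite -[RHS]h; ring. Qed.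

Lemma multiplier_relation_swap23 x y z :
  multiplier_relation x y z -> multiplier_relation x z y.
Proof. by rewrite /multiplier_relation => h; rewrite -[RHS]h; ring. Qed.

Lemma multiplier_relation_eq x y z u v : multiplier_relation x y z ->
  u - v = x * y * z - (x + y + z) + 2 -> u = v.
Proof. by move=> r e; apply/eqP; rewrite -subr_eq0 e r. Qed.

Lemma horner_size3 (p : {poly K}) x : (size p <= 3)%N ->
  p.[x] = p`_0 + p`_1 * x + p`_2 * x ^+ 2.
Proof.
move=> hp; rewrite (horner_coef_wide x hp) !big_ord_recr big_ord0 /=.
by rewrite add0r expr0 mulr1 expr1.
Qed.

Lemma deriv_horner_size3 (p : {poly K}) x : (size p <= 3)%N ->
  p^`().[x] = p`_1 + p`_2 *+ 2 * x.
Proof.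
move=> hp; have hp' : (size p^`() <= 3)%N.
  by rewrite (leq_trans (size_poly _ _)) // (leq_trans (leq_pred _)).
rewrite (horner_size3 x hp') !coef_deriv (nth_default 0 (_ : size p <= 3)%N) //.
by rewrite mul0rn mul0r addr0.
Qed.

Lemma eq0_of_difference_quotient (a b x u v : K) :
  a != b -> (a - b) * x = u - v -> u = 0 -> v = 0 -> x = 0.
Proof.
move=> /negPf ab e u0 v0; move/eqP: e; rewrite u0 v0 subrr mulf_eq0 subr_eq0 ab.
by move/eqP.
Qed.

Lemma cubic_vieta (c3 c2 c1 c0 a b d : K) : a != b -> a != d -> b != d ->
  c3 * a ^+ 3 + c2 * a ^+ 2 + c1 * a + c0 = 0 ->
  c3 * b ^+ 3 + c2 * b ^+ 2 + c1 * b + c0 = 0 ->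
  c3 * d ^+ 3 + c2 * d ^+ 2 + c1 * d + c0 = 0 ->
  c2 = - (c3 * (a + b + d)) /\ c1 = c3 * (a * b + a * d + b * d).
Proof.
move=> ab ad bd fa fb fd.
have Eab : c3 * (a ^+ 2 + a * b + b ^+ 2) + c2 * (a + b) + c1 = 0.
  by apply: (eq0_of_difference_quotient ab _ fa fb); ring.
have Ead : c3 * (a ^+ 2 + a * d + d ^+ 2) + c2 * (a + d) + c1 = 0.
  by apply: (eq0_of_difference_quotient ad _ fa fd); ring.
have E2 : c2 + c3 * (a + b + d) = 0.
  by apply: (eq0_of_difference_quotient bd _ Eab Ead); ring.
have e2 : c2 = - (c3 * (a + b + d)) by apply/eqP; rewrite -addr_eq0 E2.
by split=> //; apply/eqP; rewrite -subr_eq0 -Eab e2; apply/eqP; ring.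
Qed.

Lemma quadratic_vieta (c2 c1 c0 a b : K) : a != b ->
  c2 * a ^+ 2 + c1 * a + c0 = 0 -> c2 * b ^+ 2 + c1 * b + c0 = 0 ->
  c1 = - (c2 * (a + b)).
Proof.
move=> ab fa fb; have E : c2 * (a + b) + c1 = 0.
  by apply: (eq0_of_difference_quotient ab _ fa fb); ring.
by apply/eqP; rewrite -addr_eq0 addrC E.
Qed.

Section QuadraticMap.
Variables p q : {poly K}.
Hypothesis deg2 : rat_degree2 p q.

Lemma size_num_le3 : (size p <= 3)%N.
Proof. by case: deg2 => _ <-; rewrite leq_maxl. Qed.

Lemma size_den_le3 : (size q <= 3)%N.
Proof. by case: deg2 => _ <-; rewrite leq_maxr. Qed.

(* The fixed point equation p(a) = a q(a) is a cubic in a with leading coefficient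
   -q_2, and the multiplier is 1 + F'(a) / q(a) for that cubic F. *)
Lemma fixed_point_coef a : is_fixed p q (Some a) ->
  [/\ q`_0 + q`_1 * a + q`_2 * a ^+ 2 != 0,
      - q`_2 * a ^+ 3 + (p`_2 - q`_1) * a ^+ 2 + (p`_1 - q`_0) * a + p`_0 = 0 &
      multiplier p q (Some a) =
        1 + (- q`_2 * 3%:R * a ^+ 2 + (p`_2 - q`_1) * 2%:R * a + (p`_1 - q`_0))
            / (q`_0 + q`_1 * a + q`_2 * a ^+ 2)].
Proof.
have [hp hq] := (size_num_le3, size_den_le3).
move=> [qa0 pa]; rewrite (horner_size3 a hq) in qa0; split=> //.
  rewrite -[RHS](subrr (a * q.[a])) -{1}pa (horner_size3 a hp) (horner_size3 a hq).
  by ring.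
rewrite /multiplier /rat_deriv_at pa (deriv_horner_size3 a hp) (deriv_horner_size3 a hq).
by rewrite (horner_size3 a hq); field.
Qed.

Lemma multiplier_infty : multiplier p q None = (q`_1 * p`_2 - q`_2 * p`_1) / p`_2 ^+ 2.
Proof.
by rewrite /multiplier /rat_deriv_at !horner_coef0 !coef_deriv /recip2 !coef_poly /= mulr1n.
Qed.

Lemma multiplier_relation_finite a b d : a != b -> a != d -> b != d ->
  is_fixed p q (Some a) -> is_fixed p q (Some b) -> is_fixed p q (Some d) ->
  multiplier_relation (multiplier p q (Some a)) (multiplier p q (Some b))
                      (multiplier p q (Some d)).
Proof.
move=> ab ad bd /fixed_point_coef[qa fa ->] /fixed_point_coef[qb fb ->]
  /fixed_point_coef[qd fd ->].
have [e2 e1] := cubic_vieta ab ad bd fa fb fd.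
by rewrite /multiplier_relation e2 e1; field; rewrite qa qb qd.
Qed.

(* With infinity fixed, q has degree at most one and the fixed point cubic drops to
   a quadratic with leading coefficient p_2 - q_1. *)
Lemma multiplier_relation_infty a b : a != b ->
  is_fixed p q (Some a) -> is_fixed p q (Some b) -> is_fixed p q None ->
  multiplier_relation (multiplier p q (Some a)) (multiplier p q (Some b))
                      (multiplier p q None).
Proof.
move=> ab fixa fixb qp; rewrite /= in qp.
have q2 : q`_2 = 0 by rewrite nth_default // -ltnS (leq_trans qp size_num_le3).
have p2 : p`_2 != 0.
  have size_p : size p = 3%N.
    by case: deg2 => _; rewrite (maxn_idPl (ltnW qp)).
  have : lead_coef p != 0 by rewrite lead_coef_eq0 -size_poly_eq0 size_p.
  by rewrite lead_coefE size_p.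
case: (fixed_point_coef fixa) => qa fa ->; case: (fixed_point_coef fixb) => qb fb ->.
rewrite q2 !mul0r !addr0 in qa qb; rewrite q2 oppr0 !mul0r !add0r in fa fb.
rewrite /multiplier_relation multiplier_infty (quadratic_vieta ab fa fb) q2.
by field; rewrite p2 qa qb.
Qed.

Lemma fixed_multipliers_relation x1 x2 x3 :
  is_fixed p q x1 -> is_fixed p q x2 -> is_fixed p q x3 ->
  x1 <> x2 -> x1 <> x3 -> x2 <> x3 ->
  multiplier_relation (multiplier p q x1) (multiplier p q x2) (multiplier p q x3).
Proof.
have neq (a b : K) : Some a <> Some b -> a != b.
  by move=> ab; apply/eqP => e; apply: ab; rewrite e.
case: x1 => [a|]; case: x2 => [b|]; case: x3 => [d|] //= fix1 fix2 fix3 n12 n13 n23.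
- exact: multiplier_relation_finite (neq _ _ n12) (neq _ _ n13) (neq _ _ n23) _ _ _.
- exact: multiplier_relation_infty (neq _ _ n12) fix1 fix2 fix3.
- exact/multiplier_relation_swap23/(multiplier_relation_infty (neq _ _ n13)).
- apply/multiplier_relation_swap12/multiplier_relation_swap23.
  exact: multiplier_relation_infty (neq _ _ n23) fix2 fix3 fix1.
Qed.

End QuadraticMap.
End MultiplierRelation.

Section Ultrametric.
Variables (R : realType) (K : fieldType) (abs : K -> R).
Hypothesis abs_nonarch : nonarch_abs abs.

Lemma abs_ge0 x : 0 <= abs x. Proof. by case: abs_nonarch. Qed.

Lemma absM x y : abs (x * y) = abs x * abs y. Proof. by case: abs_nonarch. Qed.

Lemma absD_le x y z : abs x <= z -> abs y <= z -> abs (x + y) <= z.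
Proof. by case: abs_nonarch => _ _ _ h hx hy; rewrite (le_trans (h x y)) // ge_max hx. Qed.

Lemma absD_lt x y z : abs x < z -> abs y < z -> abs (x + y) < z.
Proof. by case: abs_nonarch => _ _ _ h hx hy; rewrite (le_lt_trans (h x y)) // gt_max hx. Qed.

Lemma abs1 : abs 1 = 1.
Proof.
have a1 : abs 1 != 0 by case: abs_nonarch => _ -> _ _; rewrite oner_eq0.
by apply: (mulfI a1); rewrite -absM !mulr1.
Qed.

Lemma absN x : abs (- x) = abs x.
Proof.
have a_1 : abs (-1) = 1.
  by have := absM (-1) (-1); rewrite mulrNN mulr1 abs1; have := abs_ge0 (-1); nra.
by rewrite -mulN1r absM a_1 mul1r.
Qed.

Lemma abs2_le1 : abs 2 <= 1.
Proof. by apply: absD_le; rewrite abs1. Qed.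

Lemma absD_dominant x y : abs y < abs x -> abs (x + y) = abs x.
Proof.
move=> yx; apply/eqP; rewrite eq_le absD_le ?(ltW yx) //= leNgt; apply/negP => xy.
by have := absD_lt xy (_ : abs (- y) < abs x); rewrite addrK ltxx absN => /(_ yx).
Qed.

Lemma not_repelling_le1 l : ~ repelling abs l -> abs l <= 1.
Proof. by move/negP; rewrite -leNgt. Qed.

Lemma repelling_pair_attracting l1 l2 l3 : multiplier_relation l1 l2 l3 ->
  1 < abs l1 -> 1 < abs l2 -> abs l3 < 1.
Proof.
move=> rel r1 r2; have e : l3 * (l1 * l2 - 1) = l1 + l2 - 2.
  by apply: (multiplier_relation_eq rel); ring.
have big : 1 < abs l1 * abs l2 by nra.
have small : abs (l1 + l2 - 2) < abs l1 * abs l2.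
  by rewrite !absD_lt ?absN ?(le_lt_trans abs2_le1); nra.
move: small; rewrite -e absM absD_dominant absM ?absN ?abs1 //.
by have := abs_ge0 l3; nra.
Qed.

Lemma one_repelling_indifferent l1 l2 l3 : multiplier_relation l1 l2 l3 ->
  1 < abs l1 -> abs l2 <= 1 -> abs l3 <= 1 -> abs l2 = 1 /\ abs l3 = 1.
Proof.
suff indiff2 : forall m1 m2 m3, multiplier_relation m1 m2 m3 ->
    1 < abs m1 -> abs m2 <= 1 -> abs m3 <= 1 -> abs m2 = 1.
  move=> rel r1 h2 h3; split; first exact: indiff2 rel r1 h2 h3.
  exact: indiff2 (multiplier_relation_swap23 rel) r1 h3 h2.
move=> m1 m2 m3 rel r1 h2 h3; apply/eqP; rewrite eq_le h2 /= leNgt; apply/negP => a2.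
have e : m1 * (m2 * m3 - 1) = m2 + m3 - 2.
  by apply: (multiplier_relation_eq rel); ring.
have small23 : abs (m2 * m3) < 1 by rewrite absM; have := abs_ge0 m2; nra.
have unit23 : abs (m2 * m3 - 1) = 1 by rewrite addrC absD_dominant absN abs1.
have : abs (m2 + m3 - 2) <= 1 by rewrite !absD_le // absN abs2_le1.
by rewrite -e absM unit23 mulr1; lra.
Qed.

Lemma abs_eq1_of_res_mul1 x y : abs x <= 1 -> abs y <= 1 ->
  abs (x * y - 1) < 1 -> abs x = 1 /\ abs y = 1.
Proof.
move=> hx hy hxy; have [x0 y0] := (abs_ge0 x, abs_ge0 y).
have xy1 : abs (x * y) = 1.
  apply/eqP; rewrite eq_le absM mulr_ile1 //= leNgt -absM; apply/negP => lt1.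
  by move: hxy; rewrite addrC absD_dominant absN abs1 ?ltxx.
by move: xy1; rewrite absM; split; nra.
Qed.

Lemma res_eq_of_res_mul1 u x y : abs u = 1 ->
  abs (u * x - 1) < 1 -> abs (u * y - 1) < 1 -> abs (x - y) < 1.
Proof.
move=> u1 hx hy; have e : u * (x - y) = (u * x - 1) - (u * y - 1) by ring.
have : abs (u * (x - y)) < 1 by rewrite e absD_lt ?absN.
by rewrite absM u1 mul1r.
Qed.

Lemma res_eq1_of_pairwise_products l1 l2 l3 : multiplier_relation l1 l2 l3 ->
  abs l1 <= 1 -> abs l2 <= 1 -> abs l3 <= 1 ->
  abs (l1 * l2 - 1) < 1 -> abs (l1 * l3 - 1) < 1 -> abs (l2 * l3 - 1) < 1 ->
  [/\ abs (l1 - 1) < 1, abs (l2 - 1) < 1 & abs (l3 - 1) < 1].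
Proof.
move=> rel h1 h2 h3 e12 e13 e23.
have [u1 u2] := abs_eq1_of_res_mul1 h1 h2 e12.
have [_ u3] := abs_eq1_of_res_mul1 h1 h3 e13.
have d12 : abs (l1 - l2) < 1 by apply: (res_eq_of_res_mul1 u3); rewrite mulrC.
have d13 : abs (l1 - l3) < 1 by apply: (res_eq_of_res_mul1 u2); rewrite // mulrC.
(* 2 (l1 - 1) and (l1 - 1)(l1 + 1) are small; if l1 - 1 were a unit, so would be
   2 = (l1 + 1) - (l1 - 1), a contradiction. *)
have t2 : abs (2 * (l1 - 1)) < 1.
  have -> : 2 * (l1 - 1) = l3 * (l1 * l2 - 1) + (l1 - l2)
    by symmetry; apply: (multiplier_relation_eq rel); ring.
  by rewrite absD_lt // absM u3 mul1r.
have t3 : abs ((l1 - 1) * (l1 + 1)) < 1.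
  have -> : (l1 - 1) * (l1 + 1) = l1 * (l1 - l2) + (l1 * l2 - 1) by ring.
  by rewrite absD_lt // absM u1 mul1r.
have r1 : abs (l1 - 1) < 1.
  rewrite ltNge; apply/negP => g.
  have g1 : abs (l1 - 1) = 1 by apply/eqP; rewrite eq_le g absD_le // absN abs1.
  move: t2 t3; rewrite !absM g1 mulr1 mul1r => t2 t3.
  have : abs ((l1 + 1) - 2) < 1 by rewrite absD_lt ?absN.
  have e : l1 + 1 - 2 = l1 - 1 by ring.
  by rewrite e g1 ltxx.
have e2 : l2 - 1 = - (l1 - l2) + (l1 - 1) by ring.
have e3 : l3 - 1 = - (l1 - l3) + (l1 - 1) by ring.
by split; rewrite // ?e2 ?e3 absD_lt ?absN.
Qed.

End Ultrametric.

Theorem lemma3p3 (R : realType) (K : closedFieldType) (abs : K -> R)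
  (Habs : nonarch_abs abs) (Hcompl : abs_complete abs)
  (p q : {poly K}) (Hdeg : rat_degree2 p q)
  (x1 x2 x3 : option K)
  (Hf1 : is_fixed p q x1) (Hf2 : is_fixed p q x2) (Hf3 : is_fixed p q x3)
  (H12 : x1 <> x2) (H13 : x1 <> x3) (H23 : x2 <> x3) :
  let l1 := multiplier p q x1 in
  let l2 := multiplier p q x2 in
  let l3 := multiplier p q x3 in
  ~ (repelling abs l1 /\ repelling abs l2 /\ repelling abs l3)
  /\ (* (A) *)
  ((repelling abs l1 /\ repelling abs l2 -> attracting abs l3) /\
   (repelling abs l1 /\ repelling abs l3 -> attracting abs l2) /\
   (repelling abs l2 /\ repelling abs l3 -> attracting abs l1))
  /\ (* (B) *)
  ((repelling abs l1 /\ ~ repelling abs l2 /\ ~ repelling abs l3 ->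
      indifferent abs l2 /\ indifferent abs l3) /\
   (~ repelling abs l1 /\ repelling abs l2 /\ ~ repelling abs l3 ->
      indifferent abs l1 /\ indifferent abs l3) /\
   (~ repelling abs l1 /\ ~ repelling abs l2 /\ repelling abs l3 ->
      indifferent abs l1 /\ indifferent abs l2))
  /\ (* (C) *)
  (~ repelling abs l1 /\ ~ repelling abs l2 /\ ~ repelling abs l3 ->
     (~ res_eq abs (l1 * l2) 1 \/ ~ res_eq abs (l1 * l3) 1 \/
      ~ res_eq abs (l2 * l3) 1)
     \/ (res_eq abs l1 1 /\ res_eq abs l2 1 /\ res_eq abs l3 1)).
Proof.
move=> l1 l2 l3.
have r123 : multiplier_relation l1 l2 l3 by exact: fixed_multipliers_relation.
have r213 := multiplier_relation_swap12 r123; have r132 := multiplier_relation_swap23 r123.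
have r231 := multiplier_relation_swap23 r213; have r312 := multiplier_relation_swap12 r132.
have nr := not_repelling_le1 (abs := abs).
rewrite /repelling /attracting /indifferent /res_eq.
split; first by case=> h1 [h2 /ltW]; rewrite leNgt (repelling_pair_attracting Habs r123).
split.
  split; first by case=> h h'; exact: (repelling_pair_attracting Habs r123 h h').
  split; first by case=> h h'; exact: (repelling_pair_attracting Habs r132 h h').
  by case=> h h'; exact: (repelling_pair_attracting Habs r231 h h').
split.
  split; first by case=> h1 [/nr h2 /nr h3];
    exact: (one_repelling_indifferent Habs r123 h1 h2 h3).
  split; first by case=> /nr h1 [h2 /nr h3];
    exact: (one_repelling_indifferent Habs r213 h2 h1 h3).
  by case=> /nr h1 [/nr h2 h3]; exact: (one_repelling_indifferent Habs r312 h3 h1 h2).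
case=> /nr h1 [/nr h2 /nr h3].
have [e12|] := boolP (abs (l1 * l2 - 1) < 1); last by left; left; apply/negP.
have [e13|] := boolP (abs (l1 * l3 - 1) < 1); last by left; right; left; apply/negP.
have [e23|] := boolP (abs (l2 * l3 - 1) < 1); last by left; right; right; apply/negP.
by right; case: (res_eq1_of_pairwise_products Habs r123 h1 h2 h3 e12 e13 e23).
Qed.
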